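(* Let $\Gamma$ and $\Gamma'$ be LJB-contexts such that $\Gamma\longrightarrow\Gamma'$ by one step of the cleaning rewrite system, and let $A$ be a formula. Let $\Delta\vdash E$ be a flattening of the LJB-sequent $\Gamma\vdash A$ and $\Delta'\vdash E'$ be a flattening of $\Gamma'\vdash A$. Then $\Delta\vdash E$ has a derivation in LJ$^{+}$ if and only if $\Delta'\vdash E'$ has a derivation in LJ$^{+}$, and the derivations have the same height.
   Context: Minimal predicate logic: terms $t ::= x \mid f(t_1,\dots,t_n)$, formulas $A ::= P(t_1,\dots,t_n)\mid A\rightarrow A\mid \forall x\,A$. LJ$^{+}$-sequents $\Delta\vdash E$: $\Delta$ a finite multiset of formulas. LJ$^{+}$ is the sequent calculus (formulas modulo $\alpha$-equivalence) with rules: (L$\rightarrow$) from $\Delta, A_1\rightarrow\dots\rightarrow A_n\rightarrow P\vdash A_i$ ($i=1,\dots,n$, $n\ge0$) infer $\Delta, A_1\rightarrow\dots\rightarrow A_n\rightarrow P\vdash P$, $P$ atomic; (R$\forall$) from $\Delta\vdash A$ infer $\Delta\vdash\forall x\,A$ if $x$ is not free in $\Delta$; (R$\rightarrow$) from $\Delta,A\vdash B$ infer $\Delta\vdash A\rightarrow B$. Height = maximal number of rule instances on a branch. LJB-contexts and items: an LJB-context is a finite multiset of items; an item is a formula or $[\Gamma]_V$ with $V$ a finite set of variables (bound by the bracket) and $\Gamma$ an LJB-context. $FV([\Gamma]_V)=FV(\Gamma)\setminus V$, $BV([\Gamma]_V)=BV(\Gamma)\cup V$, $FV$, $BV$ of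 a context being the unions over its items and of a formula the usual ones. An LJB-sequent $\Gamma\vdash A$ is an LJB-context and a formula. Cleaning rules (applicable anywhere in a context, contexts being multisets): $[I,\Gamma]_V\longrightarrow I,[\Gamma]_V$ if $FV(I)\cap V=\emptyset$; $[\ ]_V\longrightarrow\emptyset$; $I\,I\longrightarrow I$. A fresh $\alpha$-variant of an LJB-sequent is an LJB-sequent $\alpha$-equivalent to it (renaming variables bound by quantifiers or by brackets) in which all bound variables are pairwise distinct and distinct from the free variables. An LJ$^{+}$-sequent is a flattening of an LJB-sequent if it is obtained by erasing all brackets (keeping their contents) in a fresh $\alpha$-variant of it. *)

(* Locally nameless syntax: quantifier-bound variables are de
   Bruijn indices (so alpha-equivalence of formulas is syntactic equality);
   free variables and bracket-bound variables are named (nat). *)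
From Stdlib Require Import List Arith Permutation.
Import ListNotations.

Inductive term : Type :=
| BVar (n : nat)
| FVar (x : nat)
| Fn (f : nat) (ts : list term).

Inductive form : Type :=
| Atom (p : nat) (ts : list term)
| Imp (A B : form)
| All (A : form).

Fixpoint term_fv (t : term) : list nat :=
  match t with
  | BVar _ => []
  | FVar x => [x]
  | Fn _ ts => flat_map term_fv ts
  end.

Fixpoint form_fv (A : form) : list nat :=
  match A with
  | Atom _ ts => flat_map term_fv ts
  | Imp A B => form_fv A ++ form_fv B
  | All A => form_fv A
  end.

Fixpoint term_lc_at (k : nat) (t : term) : bool :=
  match t with
  | BVar n => n <? k
  | FVar _ => true
  | Fn _ ts => forallb (term_lc_at k) ts
  end.

Fixpoint form_lc_at (k : nat) (A : form) : bool :=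
  match A with
  | Atom _ ts => forallb (term_lc_at k) ts
  | Imp A B => form_lc_at k A && form_lc_at k B
  | All A => form_lc_at (S k) A
  end.

Definition form_lc (A : form) : Prop := form_lc_at 0 A = true.

Fixpoint term_close (k x : nat) (t : term) : term :=
  match t with
  | BVar n => BVar n
  | FVar y => if Nat.eqb y x then BVar k else FVar y
  | Fn f ts => Fn f (map (term_close k x) ts)
  end.

Fixpoint form_close (k x : nat) (A : form) : form :=
  match A with
  | Atom p ts => Atom p (map (term_close k x) ts)
  | Imp A B => Imp (form_close k x A) (form_close k x B)
  | All A => All (form_close (S k) x A)
  end.

Fixpoint term_ren (s : nat -> nat) (t : term) : term :=
  match t with
  | BVar n => BVar n
  | FVar y => FVar (s y)
  | Fn f ts => Fn f (map (term_ren s) ts)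
  end.

Fixpoint form_ren (s : nat -> nat) (A : form) : form :=
  match A with
  | Atom p ts => Atom p (map (term_ren s) ts)
  | Imp A B => Imp (form_ren s A) (form_ren s B)
  | All A => All (form_ren s A)
  end.

(* deriv D E h : the LJ+-sequent D |- E (D a multiset, represented by a list)
   has a derivation of height exactly h (height = maximal number of rule
   instances on a branch). *)
Inductive deriv : list form -> form -> nat -> Prop :=
| d_Limp (D : list form) (As : list form) (p : nat) (ts : list term) (hs : list nat) :
    In (fold_right Imp (Atom p ts) As) D ->
    length hs = length As ->
    (forall i, i < length As -> deriv D (nth i As (Atom p ts)) (nth i hs 0)) ->
    deriv D (Atom p ts) (S (list_max hs))
| d_Rall (D : list form) (A : form) (x : nat) (h : nat) :
    form_lc A ->
    ~ In x (flat_map form_fv D) ->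
    deriv D A h ->
    deriv D (All (form_close 0 x A)) (S h)
| d_Rimp (D : list form) (A B : form) (h : nat) :
    deriv (A :: D) B h ->
    deriv D (Imp A B) (S h).

Inductive item : Type :=
| IForm (A : form)
| IBr (V : list nat) (G : list item).   (* [G]_V, V a finite set of variables *)

Definition ctx := list item.

Definition inb (x : nat) (V : list nat) : bool := existsb (Nat.eqb x) V.

Fixpoint item_fv (I : item) : list nat :=
  match I with
  | IForm A => form_fv A
  | IBr V G => filter (fun x => negb (inb x V)) (flat_map item_fv G)
  end.

Definition ctx_fv (G : ctx) : list nat := flat_map item_fv G.

Fixpoint item_bv (I : item) : list nat :=
  match I with
  | IForm _ => []
  | IBr V G => nodup Nat.eq_dec V ++ flat_map item_bv G
  end.

Definition ctx_bv (G : ctx) : list nat := flat_map item_bv G.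

Fixpoint item_lc (I : item) : Prop :=
  match I with
  | IForm A => form_lc A
  | IBr _ G => fold_right (fun J P => item_lc J /\ P) True G
  end.

Definition ctx_lc (G : ctx) : Prop := Forall item_lc G.

Fixpoint item_ren (s : nat -> nat) (I : item) {struct I} : item :=
  match I with
  | IForm A => IForm (form_ren s A)
  | IBr V G => IBr V (map (item_ren (fun x => if inb x V then x else s x)) G)
  end.

(* alpha-equivalence of items / contexts: renaming of bracket-bound variables,
   contexts being multisets and V being sets (all at any depth). *)
Inductive alpha_item : item -> item -> Prop :=
| ai_form (A : form) : alpha_item (IForm A) (IForm A)
| ai_cong (V V' : list nat) (G G' : ctx) :
    (forall x, In x V <-> In x V') -> alpha_ctx G G' -> alpha_item (IBr V G) (IBr V' G')
| ai_ren (V : list nat) (G : ctx) (s : nat -> nat) :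
    (forall x, ~ In x V -> s x = x) ->
    (forall x y, In x V -> In y V -> s x = s y -> x = y) ->
    (forall x, In x V -> ~ In (s x) (item_fv (IBr V G))) ->
    (forall x, In x V -> ~ In (s x) (ctx_bv G)) ->
    alpha_item (IBr V G) (IBr (map s V) (map (item_ren s) G))
| ai_sym (I J : item) : alpha_item I J -> alpha_item J I
| ai_trans (I J K : item) : alpha_item I J -> alpha_item J K -> alpha_item I K
with alpha_ctx : ctx -> ctx -> Prop :=
| ac_nil : alpha_ctx [] []
| ac_cons (I I' : item) (G G' : ctx) :
    alpha_item I I' -> alpha_ctx G G' -> alpha_ctx (I :: G) (I' :: G')
| ac_perm (G G' : ctx) : Permutation G G' -> alpha_ctx G G'
| ac_trans (G1 G2 G3 : ctx) : alpha_ctx G1 G2 -> alpha_ctx G2 G3 -> alpha_ctx G1 G3.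

(* one step of the cleaning rewrite system, anywhere in a context,
   contexts taken as multisets and modulo alpha *)
Inductive clean_step : ctx -> ctx -> Prop :=
| cs_extract (V : list nat) (I : item) (G R : ctx) :
    (forall x, In x (item_fv I) -> ~ In x V) ->
    clean_step (IBr V (I :: G) :: R) (I :: IBr V G :: R)
| cs_empty (V : list nat) (R : ctx) :
    clean_step (IBr V [] :: R) R
| cs_dup (I : item) (R : ctx) :
    clean_step (I :: I :: R) (I :: R)
| cs_inside (V : list nat) (G G' R : ctx) :
    clean_step G G' -> clean_step (IBr V G :: R) (IBr V G' :: R)
| cs_alpha (G1 G1' G2' G2 : ctx) :
    alpha_ctx G1 G1' -> clean_step G1' G2' -> alpha_ctx G2' G2 -> clean_step G1 G2.

(* fresh alpha-variant condition for the LJB-sequent G |- A: all bracket-bound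
   variables pairwise distinct and distinct from the free variables
   (quantifier-bound variables are nameless, hence automatically fresh) *)
Definition fresh_seq (G : ctx) (A : form) : Prop :=
  NoDup (ctx_bv G) /\
  (forall x, In x (ctx_bv G) -> ~ In x (ctx_fv G ++ form_fv A)).

Fixpoint item_erase (I : item) : list form :=
  match I with
  | IForm A => [A]
  | IBr _ G => flat_map item_erase G
  end.

Definition ctx_erase (G : ctx) : list form := flat_map item_erase G.

Definition flattening (D : list form) (E : form) (G : ctx) (A : form) : Prop :=
  exists G0 : ctx, alpha_ctx G G0 /\ fresh_seq G0 A /\
    Permutation D (ctx_erase G0) /\ E = A.

(* Call an instance of an LJB-context under a valuation [s] any list obtained
   by erasing its brackets after renaming its free variables by [s], where
   each bracket [[G]_V] may in addition rename its own variables [V] in an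
   arbitrary way.  Alpha-conversion and every cleaning step, in either
   direction, send each instance of one context to an instance of the other
   that uses only formulas already present (the duplication rule is why this
   is set inclusion rather than a permutation).  The flattening of a context
   is one of its instances; conversely, when the context is fresh, every
   instance contains the image of its flattening under a single renaming that
   fixes the free variables, because distinct brackets bind distinct
   variables.  Hence the flattening of one side, renamed, is contained in the
   flattening of the other, and LJ+ derivations are stable under renaming of
   free variables and under enlarging the set of hypotheses, with the same
   height. *)

From Stdlib Require Import List Arith Permutation Lia.
Import ListNotations.

Fixpoint term_ind_nested (P : term -> Prop) (HB : forall n, P (BVar n))
  (HF : forall x, P (FVar x)) (HFn : forall f ts, Forall P ts -> P (Fn f ts))
  (t : term) : P t :=
  match t with
  | BVar n => HB n
  | FVar x => HF x
  | Fn f ts => HFn f ts ((fix F (l : list term) : Forall P l :=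
       match l with
       | [] => Forall_nil _
       | u :: l' => Forall_cons _ (term_ind_nested P HB HF HFn u) (F l')
       end) ts)
  end.

Lemma term_ren_ext s s' t :
  (forall x, In x (term_fv t) -> s x = s' x) -> term_ren s t = term_ren s' t.
Proof.
  induction t as [| |f ts IH] using term_ind_nested; simpl; intros Hs; auto.
  - f_equal. apply map_ext_Forall. rewrite Forall_forall in *. intros u Hu.
    apply IH; auto. intros x Hx; apply Hs, in_flat_map; eauto.
Qed.

Lemma form_ren_ext s s' A :
  (forall x, In x (form_fv A) -> s x = s' x) -> form_ren s A = form_ren s' A.
Proof.
  induction A; simpl; intros Hs.
  - f_equal. apply map_ext_in. intros t Ht. apply term_ren_ext.
    intros x Hx; apply Hs, in_flat_map; eauto.
  - rewrite IHA1, IHA2; auto; intros; apply Hs, in_or_app; auto.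
  - rewrite IHA; auto.
Qed.

Lemma term_ren_id t : term_ren (fun x => x) t = t.
Proof.
  induction t as [| |f ts IH] using term_ind_nested; simpl; auto.
  f_equal. induction IH; simpl; f_equal; auto.
Qed.

Lemma form_ren_id A : form_ren (fun x => x) A = A.
Proof.
  induction A; simpl; f_equal; auto.
  induction ts; simpl; f_equal; auto using term_ren_id.
Qed.

Lemma term_ren_comp s s' t : term_ren s' (term_ren s t) = term_ren (fun x => s' (s x)) t.
Proof.
  induction t as [| |f ts IH] using term_ind_nested; simpl; auto.
  f_equal. induction IH; simpl; f_equal; auto.
Qed.

Lemma form_ren_comp s s' A : form_ren s' (form_ren s A) = form_ren (fun x => s' (s x)) A.
Proof.
  induction A; simpl; f_equal; auto.
  induction ts; simpl; f_equal; auto using term_ren_comp.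
Qed.

Lemma term_lc_at_ren s k t : term_lc_at k (term_ren s t) = term_lc_at k t.
Proof.
  induction t as [| |f ts IH] using term_ind_nested; simpl; auto.
  induction IH as [|u ts Hu _ IHts]; simpl; auto. rewrite Hu, IHts; auto.
Qed.

Lemma form_lc_at_ren s k A : form_lc_at k (form_ren s A) = form_lc_at k A.
Proof.
  revert k; induction A; simpl; intros k; auto.
  - induction ts; simpl; auto. rewrite term_lc_at_ren, IHts; auto.
  - rewrite IHA1, IHA2; auto.
Qed.

Definition upd (s : nat -> nat) (x z : nat) : nat -> nat :=
  fun y => if Nat.eqb y x then z else s y.

Lemma term_ren_close s x z k t :
  (forall y, In y (term_fv t) -> y <> x -> s y <> z) ->
  term_ren s (term_close k x t) = term_close k z (term_ren (upd s x z) t).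
Proof.
  induction t as [|y|f ts IH] using term_ind_nested; simpl; intros Hs; auto.
  - unfold upd. destruct (Nat.eqb y x) eqn:Eyx; simpl.
    + rewrite Nat.eqb_refl; auto.
    + destruct (Nat.eqb (s y) z) eqn:Esz; auto.
      apply Nat.eqb_eq in Esz. apply Nat.eqb_neq in Eyx.
      exfalso; eapply Hs; simpl; eauto.
  - f_equal. rewrite !map_map. apply map_ext_Forall. rewrite Forall_forall in *.
    intros u Hu. apply IH; auto. intros y Hy; apply Hs, in_flat_map; eauto.
Qed.

Lemma form_ren_close s x z k A :
  (forall y, In y (form_fv A) -> y <> x -> s y <> z) ->
  form_ren s (form_close k x A) = form_close k z (form_ren (upd s x z) A).
Proof.
  revert k; induction A; simpl; intros k Hs.
  - f_equal. rewrite !map_map. apply map_ext_in. intros t Ht. apply term_ren_close.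
    intros y Hy; apply Hs, in_flat_map; eauto.
  - rewrite IHA1, IHA2; auto; intros; apply Hs; auto; apply in_or_app; auto.
  - rewrite IHA; auto.
Qed.

Lemma form_ren_fold_Imp s P As :
  form_ren s (fold_right Imp P As) = fold_right Imp (form_ren s P) (map (form_ren s) As).
Proof. induction As; simpl; f_equal; auto. Qed.

Lemma exists_fresh (l : list nat) : exists z, ~ In z l.
Proof.
  exists (S (list_max l)). intros Hin.
  assert (Hle := proj1 (list_max_le l (list_max l)) (le_n _)).
  rewrite Forall_forall in Hle. specialize (Hle _ Hin). lia.
Qed.

(* Contexts enter LJ+ only through membership, so this covers weakening and
   contraction as well. *)
Lemma deriv_ren_incl D E h : deriv D E h ->
  forall s D', (forall B, In B D -> In (form_ren s B) D') -> deriv D' (form_ren s E) h.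
Proof.
  induction 1 as [D As p ts hs Hin Hlen _ IH | D A x h Hlc Hx _ IH | D A B h _ IH];
    intros s D' HD.
  - apply HD in Hin. rewrite form_ren_fold_Imp in Hin.
    apply (d_Limp D' (map (form_ren s) As) p (map (term_ren s) ts) hs Hin).
    + rewrite length_map; auto.
    + intros i Hi. rewrite length_map in Hi.
      change (Atom p (map (term_ren s) ts)) with (form_ren s (Atom p ts)).
      rewrite map_nth. apply IH; auto.
  - destruct (exists_fresh (flat_map form_fv D' ++ map s (form_fv A))) as [z Hz].
    rewrite in_app_iff, in_map_iff in Hz.
    simpl. rewrite (form_ren_close s x z 0 A)
      by (intros y Hy _ Hsy; apply Hz; right; eauto).
    apply d_Rall.
    + unfold form_lc. rewrite form_lc_at_ren; auto.
    + intros Hc; apply Hz; auto.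
    + apply IH. intros B HB. rewrite (form_ren_ext (upd s x z) s); auto.
      intros y Hy. unfold upd. destruct (Nat.eqb y x) eqn:Eyx; auto.
      apply Nat.eqb_eq in Eyx; subst. exfalso; apply Hx, in_flat_map; eauto.
  - simpl. apply d_Rimp, IH. intros C [<-|HC]; simpl; auto.
Qed.

Section ItemInduction.
Variables (P : item -> Prop) (Q : ctx -> Prop).
Hypotheses (HForm : forall A, P (IForm A)) (HBr : forall V G, Q G -> P (IBr V G))
  (Hnil : Q []) (Hcons : forall I G, P I -> Q G -> Q (I :: G)).

Fixpoint item_ind_nested (I : item) : P I :=
  match I with
  | IForm A => HForm A
  | IBr V G => HBr V G ((fix F (G : ctx) : Q G :=
      match G with
      | [] => Hnil
      | J :: G' => Hcons J G' (item_ind_nested J) (F G')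
      end) G)
  end.

Lemma ctx_ind_nested : forall G, Q G.
Proof. induction G; auto using item_ind_nested. Qed.

Lemma item_ctx_ind : (forall I, P I) /\ (forall G, Q G).
Proof. split; [exact item_ind_nested | exact ctx_ind_nested]. Qed.

End ItemInduction.

Lemma inb_false x V : inb x V = false <-> ~ In x V.
Proof.
  unfold inb. rewrite <- Bool.not_true_iff_false, existsb_exists.
  split; intros H Hc; apply H.
  - exists x; split; auto. apply Nat.eqb_refl.
  - destruct Hc as [y [Hy Hxy]]. apply Nat.eqb_eq in Hxy; subst; auto.
Qed.

Lemma In_item_fv_IBr x V G : In x (item_fv (IBr V G)) <-> In x (ctx_fv G) /\ ~ In x V.
Proof. simpl. rewrite filter_In, Bool.negb_true_iff, inb_false. reflexivity. Qed.

Lemma In_item_bv_IBr x V G : In x (item_bv (IBr V G)) <-> In x V \/ In x (ctx_bv G).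
Proof. simpl. rewrite in_app_iff, nodup_In. reflexivity. Qed.

Lemma NoDup_app_not_In {A} (l1 l2 : list A) a : NoDup (l1 ++ l2) -> In a l1 -> ~ In a l2.
Proof.
  induction l1 as [|b l1 IH]; simpl; intros Hnd Ha; [contradiction|].
  inversion Hnd as [|? ? Hb Hnd']; subst. destruct Ha as [<-|Ha]; auto.
  intros Hc; apply Hb, in_or_app; auto.
Qed.

Lemma ctx_erase_fv :
  (forall I B x, In B (item_erase I) -> In x (form_fv B) ->
     In x (item_fv I) \/ In x (item_bv I)) /\
  (forall G B x, In B (ctx_erase G) -> In x (form_fv B) ->
     In x (ctx_fv G) \/ In x (ctx_bv G)).
Proof.
  apply item_ctx_ind.
  - intros A B x [<-|[]]; auto.
  - intros V G IH B x HB Hx. rewrite In_item_fv_IBr, In_item_bv_IBr.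
    destruct (In_dec Nat.eq_dec x V); [|destruct (IH B x HB Hx)]; tauto.
  - intros B x [].
  - intros I G IHI IHG B x HB Hx. unfold ctx_erase, ctx_fv, ctx_bv in *; simpl in *.
    rewrite !in_app_iff in *.
    destruct HB as [HB|HB]; [destruct (IHI B x HB Hx) | destruct (IHG B x HB Hx)]; tauto.
Qed.

Inductive inst_item : (nat -> nat) -> item -> list form -> Prop :=
| ii_form s A : inst_item s (IForm A) [form_ren s A]
| ii_br s t V G X :
    (forall x, ~ In x V -> t x = s x) -> inst_ctx t G X -> inst_item s (IBr V G) X
with inst_ctx : (nat -> nat) -> ctx -> list form -> Prop :=
| ic_nil s : inst_ctx s [] []
| ic_cons s I G X Y : inst_item s I X -> inst_ctx s G Y -> inst_ctx s (I :: G) (X ++ Y).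

Scheme inst_item_mut := Induction for inst_item Sort Prop
with inst_ctx_mut := Induction for inst_ctx Sort Prop.
Combined Scheme inst_mutind from inst_item_mut, inst_ctx_mut.

Lemma inst_ext :
  (forall s I X, inst_item s I X ->
     forall s', (forall x, In x (item_fv I) -> s x = s' x) -> inst_item s' I X) /\
  (forall s G X, inst_ctx s G X ->
     forall s', (forall x, In x (ctx_fv G) -> s x = s' x) -> inst_ctx s' G X).
Proof.
  apply inst_mutind.
  - intros s A s' Hs. rewrite (form_ren_ext s s') by auto. constructor.
  - intros s t V G X Ht _ IH s' Hs.
    apply (ii_br s' (fun x => if inb x V then t x else s' x)).
    + intros x Hx. apply inb_false in Hx. rewrite Hx; auto.
    + apply IH. intros x Hx. destruct (inb x V) eqn:HxV; auto.
      apply inb_false in HxV. rewrite Ht by auto. apply Hs, In_item_fv_IBr; auto.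
  - constructor.
  - intros s I G X Y _ IHI _ IHG s' Hs. unfold ctx_fv in Hs; simpl in Hs.
    constructor; [apply IHI | apply IHG]; intros; apply Hs, in_or_app; auto.
Qed.

Lemma inst_item_ext s s' I X :
  (forall x, In x (item_fv I) -> s x = s' x) -> inst_item s I X -> inst_item s' I X.
Proof. intros Hs HI; exact (proj1 inst_ext s I X HI s' Hs). Qed.

Lemma inst_ctx_ext s s' G X :
  (forall x, In x (ctx_fv G) -> s x = s' x) -> inst_ctx s G X -> inst_ctx s' G X.
Proof. intros Hs HG; exact (proj2 inst_ext s G X HG s' Hs). Qed.

Lemma inst_ctx_erase s G : inst_ctx s G (map (form_ren s) (ctx_erase G)).
Proof.
  revert G s.
  apply (ctx_ind_nested
    (fun I => forall s, inst_item s I (map (form_ren s) (item_erase I)))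
    (fun G => forall s, inst_ctx s G (map (form_ren s) (ctx_erase G)))).
  - constructor.
  - intros V G IH s. apply (ii_br s s); auto.
  - constructor.
  - intros I G IHI IHG s. unfold ctx_erase; simpl. rewrite map_app. constructor; auto.
Qed.

Lemma inst_ren :
  (forall I s t X, (forall x, s x = x \/ ~ In (s x) (item_bv I)) ->
     inst_item t (item_ren s I) X <-> inst_item (fun x => t (s x)) I X) /\
  (forall G s t X, (forall x, s x = x \/ ~ In (s x) (ctx_bv G)) ->
     inst_ctx t (map (item_ren s) G) X <-> inst_ctx (fun x => t (s x)) G X).
Proof.
  apply item_ctx_ind.
  - intros A s t X _; simpl. split; intros Hi; inversion Hi; subst.
    + rewrite form_ren_comp; constructor.
    + rewrite <- (form_ren_comp s t A); constructor.
  - intros W H IH s t X Hs; simpl.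
    set (sW := fun x => if inb x W then x else s x).
    assert (HsW : forall x, sW x = x \/ ~ In (sW x) (ctx_bv H)).
    { intros x; unfold sW; destruct (inb x W); auto.
      destruct (Hs x) as [E|E]; auto. right; intros Hc; apply E, In_item_bv_IBr; auto. }
    assert (Hout : forall x, ~ In x W -> ~ In (s x) W).
    { intros x Hx Hc; destruct (Hs x) as [E|E].
      - rewrite E in Hc; auto.
      - apply E, In_item_bv_IBr; auto. }
    split; intros Hi; inversion Hi as [|? t0 ? ? ? Ht0 Hct]; subst.
    + apply (IH sW t0 X HsW) in Hct.
      apply (ii_br _ (fun x => if inb x W then t0 x else t (s x))).
      * intros x Hx; apply inb_false in Hx; rewrite Hx; auto.
      * revert Hct; apply inst_ctx_ext. intros x _; unfold sW.
        destruct (inb x W) eqn:HxW; auto. apply Ht0, Hout, inb_false; auto.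
    + apply (ii_br _ (fun y => if inb y W then t0 y else t y)).
      * intros x Hx; apply inb_false in Hx; rewrite Hx; auto.
      * apply (IH sW _ X HsW). revert Hct; apply inst_ctx_ext. intros x _; unfold sW.
        destruct (inb x W) eqn:HxW; [rewrite HxW; auto|].
        rewrite (proj2 (inb_false (s x) W)) by (apply Hout, inb_false; auto).
        apply Ht0, inb_false; auto.
  - intros s t X _; simpl. split; intros Hi; inversion Hi; constructor.
  - intros I G IHI IHG s t X Hs; simpl.
    unfold ctx_bv in Hs; simpl in Hs; fold (ctx_bv G) in Hs.
    assert (HsI : forall x, s x = x \/ ~ In (s x) (item_bv I)).
    { intros x; specialize (Hs x); rewrite in_app_iff in Hs; tauto. }
    assert (HsG : forall x, s x = x \/ ~ In (s x) (ctx_bv G)).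
    { intros x; specialize (Hs x); rewrite in_app_iff in Hs; tauto. }
    split; intros Hi; inversion Hi; subst; constructor;
      first [apply (IHI s t); auto | apply (IHG s t); auto].
Qed.

Section BracketRenaming.
Variables (V : list nat) (G : ctx) (s : nat -> nat).
Hypotheses (Hs_out : forall x, ~ In x V -> s x = x)
  (Hs_inj : forall x y, In x V -> In y V -> s x = s y -> x = y)
  (Hs_fv : forall x, In x V -> ~ In (s x) (item_fv (IBr V G)))
  (Hs_bv : forall x, In x V -> ~ In (s x) (ctx_bv G)).

Lemma ren_no_capture x : s x = x \/ ~ In (s x) (ctx_bv G).
Proof. destruct (In_dec Nat.eq_dec x V); auto. Qed.

Lemma inst_IBr_ren_fwd σ X :
  inst_item σ (IBr V G) X -> inst_item σ (IBr (map s V) (map (item_ren s) G)) X.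
Proof.
  intros Hi; inversion Hi as [|? t ? ? ? Ht Hct]; subst.
  (* [t'] reads each renamed variable [s x] as [t] reads [x] *)
  set (t' := fun y => match find (fun x => Nat.eqb (s x) y) V with
                      | Some x => t x | None => σ y end).
  apply (ii_br _ t').
  - intros y Hy. unfold t'. destruct (find _ V) as [x|] eqn:F; auto.
    apply find_some in F as [Fx Fy]. apply Nat.eqb_eq in Fy; subst.
    exfalso; apply Hy, in_map; auto.
  - apply (proj2 inst_ren G s t' X ren_no_capture).
    revert Hct; apply inst_ctx_ext. intros x Hx. unfold t'.
    destruct (find _ V) as [y|] eqn:F.
    + apply find_some in F as [Fy Fxy]. apply Nat.eqb_eq in Fxy.
      destruct (In_dec Nat.eq_dec x V) as [HxV|HxV].
      * rewrite (Hs_inj y x); auto.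
      * rewrite (Hs_out x HxV) in Fxy. exfalso; apply (Hs_fv y Fy).
        rewrite Fxy. apply In_item_fv_IBr; auto.
    + destruct (In_dec Nat.eq_dec x V) as [HxV|HxV].
      * apply (find_none _ _ F) in HxV. rewrite Nat.eqb_refl in HxV; discriminate.
      * rewrite (Hs_out x HxV). apply Ht; auto.
Qed.

Lemma inst_IBr_ren_bwd σ X :
  inst_item σ (IBr (map s V) (map (item_ren s) G)) X -> inst_item σ (IBr V G) X.
Proof.
  intros Hi; inversion Hi as [|? t ? ? ? Ht Hct]; subst.
  apply (proj1 (proj2 inst_ren G s t X ren_no_capture)) in Hct.
  apply (ii_br _ (fun x => if inb x V then t (s x) else σ x)).
  - intros x Hx. apply inb_false in Hx. rewrite Hx; auto.
  - revert Hct; apply inst_ctx_ext. intros x Hx.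
    destruct (inb x V) eqn:HxV; auto. apply inb_false in HxV.
    rewrite (Hs_out x HxV). apply Ht. intros Hm. apply in_map_iff in Hm as [y [Hyx Hy]].
    apply (Hs_fv y Hy). rewrite Hyx. apply In_item_fv_IBr; auto.
Qed.

End BracketRenaming.

Definition inst_incl {T : Type} (inst : (nat -> nat) -> T -> list form -> Prop) (a b : T) :=
  forall s X, inst s a X -> exists Y, inst s b Y /\ incl Y X.

Lemma inst_incl_refl {T} inst (a : T) : inst_incl inst a a.
Proof. intros s X Ha; exists X; split; auto using incl_refl. Qed.

Lemma inst_incl_trans {T} inst (a b c : T) :
  inst_incl inst a b -> inst_incl inst b c -> inst_incl inst a c.
Proof.
  intros Hab Hbc s X Ha. destruct (Hab s X Ha) as [Y [Hb HYX]].
  destruct (Hbc s Y Hb) as [Z [Hc HZY]]. exists Z; split; eauto using incl_tran.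
Qed.

Lemma inst_incl_of_impl {T} (inst : (nat -> nat) -> T -> list form -> Prop) a b :
  (forall s X, inst s a X -> inst s b X) -> inst_incl inst a b.
Proof. intros Hab s X Ha; exists X; split; auto using incl_refl. Qed.

Lemma inst_incl_IBr V V' G G' :
  (forall x, In x V <-> In x V') -> inst_incl inst_ctx G G' ->
  inst_incl inst_item (IBr V G) (IBr V' G').
Proof.
  intros HV HG s X Hi; inversion Hi as [|? t ? ? ? Ht Hct]; subst.
  destruct (HG t X Hct) as [Y [HY HYX]]. exists Y; split; auto.
  apply (ii_br _ t); auto. intros x Hx; apply Ht; rewrite HV; auto.
Qed.

Lemma inst_incl_cons I I' G G' :
  inst_incl inst_item I I' -> inst_incl inst_ctx G G' ->
  inst_incl inst_ctx (I :: G) (I' :: G').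
Proof.
  intros HI HG s X Hi; inversion Hi as [|? ? ? XI XG HXI HXG]; subst.
  destruct (HI s XI HXI) as [YI [HYI HI']]. destruct (HG s XG HXG) as [YG [HYG HG']].
  exists (YI ++ YG); split; [constructor | apply incl_app_app]; auto.
Qed.

Lemma inst_ctx_perm G G' s X :
  Permutation G G' -> inst_ctx s G X -> exists Y, inst_ctx s G' Y /\ Permutation X Y.
Proof.
  intros HG; revert X; induction HG as [|I G G' _ IH|I J G|G1 G2 G3 _ IH12 _ IH23];
    intros X Hi.
  - exists X; split; auto.
  - inversion Hi as [|? ? ? XI XG HXI HXG]; subst.
    destruct (IH XG HXG) as [Y [HY HP]].
    exists (XI ++ Y); split; [constructor | apply Permutation_app_head]; auto.
  - inversion Hi as [|? ? ? XJ XIG HXJ HXIG]; subst.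
    inversion HXIG as [|? ? ? XI XG HXI HXG]; subst.
    exists (XI ++ (XJ ++ XG)); split; [repeat constructor; auto|].
    rewrite !app_assoc; apply Permutation_app_tail, Permutation_app_comm.
  - destruct (IH12 X Hi) as [Y [HY HXY]]. destruct (IH23 Y HY) as [Z [HZ HYZ]].
    exists Z; split; eauto using Permutation_trans.
Qed.

Lemma inst_incl_perm G G' : Permutation G G' -> inst_incl inst_ctx G G'.
Proof.
  intros HG s X Hi. destruct (inst_ctx_perm G G' s X HG Hi) as [Y [HY HXY]].
  exists Y; split; auto. intros B HB. apply Permutation_in with Y; auto.
  apply Permutation_sym; auto.
Qed.

Scheme alpha_item_mut := Induction for alpha_item Sort Prop
with alpha_ctx_mut := Induction for alpha_ctx Sort Prop.
Combined Scheme alpha_mutind from alpha_item_mut, alpha_ctx_mut.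

Lemma alpha_inst_incl :
  (forall I J, alpha_item I J -> inst_incl inst_item I J /\ inst_incl inst_item J I) /\
  (forall G G', alpha_ctx G G' -> inst_incl inst_ctx G G' /\ inst_incl inst_ctx G' G).
Proof.
  apply alpha_mutind.
  - split; apply inst_incl_refl.
  - intros V V' G G' HV _ [HGG' HG'G].
    split; apply inst_incl_IBr; auto. intros x; rewrite HV; tauto.
  - intros V G s Hout Hinj Hfv Hbv.
    split; apply inst_incl_of_impl; intros σ X.
    + apply inst_IBr_ren_fwd; auto.
    + apply inst_IBr_ren_bwd; auto.
  - tauto.
  - intros I J K _ [HIJ HJI] _ [HJK HKJ]. split; eapply inst_incl_trans; eauto.
  - split; apply inst_incl_refl.
  - intros I I' G G' _ [HII' HI'I] _ [HGG' HG'G]. split; apply inst_incl_cons; auto.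
  - intros G G' HP. split; apply inst_incl_perm; auto using Permutation_sym.
  - intros G1 G2 G3 _ [H12 H21] _ [H23 H32]. split; eapply inst_incl_trans; eauto.
Qed.

Lemma inst_ctx_extract s V I G R X :
  (forall x, In x (item_fv I) -> ~ In x V) ->
  inst_ctx s (IBr V (I :: G) :: R) X <-> inst_ctx s (I :: IBr V G :: R) X.
Proof.
  intros HI; split; intros Hi.
  - inversion Hi as [|? ? ? XB XR HB HR]; subst.
    inversion HB as [|? t ? ? ? Ht Hct]; subst.
    inversion Hct as [|? ? ? XI XG HXI HXG]; subst.
    rewrite <- app_assoc. constructor.
    + revert HXI; apply inst_item_ext. intros x Hx; apply Ht, HI; auto.
    + constructor; auto. apply (ii_br _ t); auto.
  - inversion Hi as [|? ? ? XI XBR HXI HBR]; subst.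
    inversion HBR as [|? ? ? XB XR HB HR]; subst.
    inversion HB as [|? t ? ? ? Ht Hct]; subst.
    rewrite app_assoc. constructor; auto. apply (ii_br _ t); auto. constructor; auto.
    revert HXI; apply inst_item_ext. intros x Hx; symmetry; apply Ht, HI; auto.
Qed.

Lemma inst_ctx_IBr_nil s V R X : inst_ctx s (IBr V [] :: R) X <-> inst_ctx s R X.
Proof.
  split; intros Hi.
  - inversion Hi as [|? ? ? XB XR HB HR]; subst.
    inversion HB as [|? t ? ? ? _ Hct]; subst. inversion Hct; subst; auto.
  - apply (ic_cons s (IBr V []) R [] X); auto. apply (ii_br s s); auto. constructor.
Qed.

Lemma inst_incl_dup I R :
  inst_incl inst_ctx (I :: I :: R) (I :: R) /\ inst_incl inst_ctx (I :: R) (I :: I :: R).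
Proof.
  split; intros s X Hi.
  - inversion Hi as [|? ? ? X1 X2R H1 H2R]; subst.
    inversion H2R as [|? ? ? X2 XR H2 HR]; subst.
    exists (X1 ++ XR); split; [constructor; auto|].
    apply incl_app_app; [apply incl_refl | apply incl_appr, incl_refl].
  - inversion Hi as [|? ? ? XI XR HXI HXR]; subst.
    exists (XI ++ (XI ++ XR)); split; [repeat constructor; auto|].
    apply incl_app; [apply incl_appl, incl_refl | apply incl_refl].
Qed.

Lemma clean_step_inst_incl G G' :
  clean_step G G' -> inst_incl inst_ctx G G' /\ inst_incl inst_ctx G' G.
Proof.
  induction 1 as [V I G R HI|V R|I R|V G G' R _ [HGG' HG'G]|G1 G1' G2' G2 H11 _ [H H'] H22].
  - split; apply inst_incl_of_impl; intros s X; apply inst_ctx_extract; auto.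
  - split; apply inst_incl_of_impl; intros s X; apply inst_ctx_IBr_nil.
  - apply inst_incl_dup.
  - split; apply inst_incl_cons; try apply inst_incl_refl;
      apply inst_incl_IBr; tauto.
  - destruct (proj2 alpha_inst_incl _ _ H11) as [A1 A1'].
    destruct (proj2 alpha_inst_incl _ _ H22) as [A2 A2'].
    split.
    + apply (inst_incl_trans _ _ G1'); auto. apply (inst_incl_trans _ _ G2'); auto.
    + apply (inst_incl_trans _ _ G2'); auto. apply (inst_incl_trans _ _ G1'); auto.
Qed.

Lemma inst_fresh_uniform :
  (forall σ I Y, inst_item σ I Y -> NoDup (item_bv I) ->
     (forall x, In x (item_bv I) -> ~ In x (item_fv I)) ->
     exists s, (forall x, ~ In x (item_bv I) -> s x = σ x) /\
       forall B, In B (item_erase I) -> In (form_ren s B) Y) /\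
  (forall σ G Y, inst_ctx σ G Y -> NoDup (ctx_bv G) ->
     (forall x, In x (ctx_bv G) -> ~ In x (ctx_fv G)) ->
     exists s, (forall x, ~ In x (ctx_bv G) -> s x = σ x) /\
       forall B, In B (ctx_erase G) -> In (form_ren s B) Y).
Proof.
  apply inst_mutind.
  - intros σ A _ _. exists σ; split; [auto|]. intros B [<-|[]]; left; auto.
  - intros σ t V G X Ht _ IH Hnd Hfr. simpl in Hnd.
    destruct IH as [s [Hs HsX]].
    + eapply NoDup_app_remove_l; eauto.
    + intros x Hx Hxfv. destruct (In_dec Nat.eq_dec x V) as [HxV|HxV].
      * apply (NoDup_app_not_In _ _ x Hnd); auto. apply nodup_In; auto.
      * apply (Hfr x); [apply In_item_bv_IBr | apply In_item_fv_IBr]; auto.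
    + exists s; split; auto. intros x Hx. rewrite In_item_bv_IBr in Hx.
      rewrite Hs, Ht; tauto.
  - intros σ _ _. exists σ; split; [auto|]. intros B [].
  - intros σ I G XI XG _ IHI _ IHG Hnd Hfr.
    unfold ctx_bv, ctx_fv in *; simpl in *. fold (ctx_bv G) (ctx_fv G) in *.
    destruct IHI as [s1 [Hs1 Hs1X]].
    { eapply NoDup_app_remove_r; eauto. }
    { intros x Hx Hxfv. apply (Hfr x); apply in_or_app; auto. }
    destruct IHG as [s2 [Hs2 Hs2X]].
    { eapply NoDup_app_remove_l; eauto. }
    { intros x Hx Hxfv. apply (Hfr x); apply in_or_app; auto. }
    exists (fun x => if In_dec Nat.eq_dec x (item_bv I) then s1 x else s2 x). split.
    + intros x Hx. rewrite in_app_iff in Hx.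
      destruct (In_dec Nat.eq_dec x (item_bv I)); [tauto|]. apply Hs2; tauto.
    + intros B HB. unfold ctx_erase in HB; simpl in HB. apply in_or_app.
      apply in_app_or in HB as [HB|HB]; [left | right].
      * erewrite form_ren_ext; [apply Hs1X; eauto|]. intros x Hx.
        destruct (In_dec Nat.eq_dec x (item_bv I)); auto.
        destruct (proj1 ctx_erase_fv I B x HB Hx) as [Hxfv|]; [|contradiction].
        rewrite Hs1, Hs2; auto. intros Hc. apply (Hfr x); apply in_or_app; auto.
      * erewrite form_ren_ext; [apply Hs2X; eauto|]. intros x Hx.
        destruct (In_dec Nat.eq_dec x (item_bv I)) as [HxI|]; auto. exfalso.
        destruct (proj2 ctx_erase_fv G B x HB Hx) as [Hxfv|HxG].
        -- apply (Hfr x); apply in_or_app; auto.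
        -- apply (NoDup_app_not_In _ _ x Hnd); auto.
Qed.

Lemma flattening_deriv G G' A D E D' E' h :
  inst_incl inst_ctx G' G -> flattening D E G A -> flattening D' E' G' A ->
  deriv D E h -> deriv D' E' h.
Proof.
  intros HG'G [G0 [HG0 [[Hnd Hfr] [HD ->]]]] [G0' [HG0' [_ [HD' ->]]]] Hd.
  assert (Hincl : inst_incl inst_ctx G0' G0).
  { apply (inst_incl_trans _ _ G'); [exact (proj2 (proj2 alpha_inst_incl _ _ HG0'))|].
    apply (inst_incl_trans _ _ G); [auto | exact (proj1 (proj2 alpha_inst_incl _ _ HG0))]. }
  destruct (Hincl _ _ (inst_ctx_erase (fun x => x) G0')) as [Y [HY HYincl]].
  destruct (proj2 inst_fresh_uniform _ _ _ HY Hnd) as [s [Hs HsY]].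
  { intros x Hx Hxfv; apply (Hfr x Hx), in_or_app; auto. }
  assert (HA : form_ren s A = A).
  { rewrite <- (form_ren_id A) at 2. apply form_ren_ext. intros x Hx. apply Hs.
    intros Hbv. apply (Hfr x Hbv), in_or_app; auto. }
  rewrite <- HA. apply (deriv_ren_incl _ _ _ Hd). intros B HB.
  apply (Permutation_in _ HD), HsY, HYincl, in_map_iff in HB as [B' [HB' HB'G0']].
  rewrite form_ren_id in HB'; subst.
  apply (Permutation_in _ (Permutation_sym HD')); auto.
Qed.

Theorem proposition4 (G G' : ctx) (A : form) (D D' : list form) (E E' : form) :
  ctx_lc G -> form_lc A ->
  clean_step G G' ->
  flattening D E G A ->
  flattening D' E' G' A ->
  forall h : nat, deriv D E h <-> deriv D' E' h.
Proof.
  intros _ _ Hstep Hflat Hflat' h.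
  destruct (clean_step_inst_incl G G' Hstep) as [HGG' HG'G].
  split; [apply (flattening_deriv G G' A) | apply (flattening_deriv G' G A)]; auto.
Qed.
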